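(* For all integers $m \geq 3$ and $n \geq 1$, $s_{n,m}(112,122)=2^{n-1}$.
   Context: For positive integers $n,m$, $[n]_m$ denotes the regular multiset $\{1^m,2^m,\ldots,n^m\}$ (each element of $[n]=\{1,\dots,n\}$ occurs exactly $m$ times), and a permutation of $[n]_m$ is a sequence of length $nm$ in which each $i\in[n]$ appears exactly $m$ times. A sequence $\sigma=\sigma_1\cdots\sigma_L$ of integers contains a pattern $\pi=\pi_1\cdots\pi_k$ (a sequence of positive integers, possibly with repeated letters) if there are indices $i_1<\dots<i_k$ such that for all $a,b$: $\sigma_{i_a}<\sigma_{i_b}\iff \pi_a<\pi_b$ and $\sigma_{i_a}=\sigma_{i_b}\iff\pi_a=\pi_b$ (i.e. the subsequence is order-isomorphic to $\pi$); otherwise $\sigma$ avoids $\pi$. For a set of patterns $\Pi$, $s_{n,m}(\Pi)$ is the number of permutations of $[n]_m$ avoiding every pattern in $\Pi$. *)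

From mathcomp Require Import all_boot.
Set Implicit Arguments. Unset Strict Implicit. Unset Printing Implicit Defensive.

Fixpoint subseqs (s : seq nat) : seq (seq nat) :=
  if s is x :: s' then
    let r := subseqs s' in [seq x :: t | t <- r] ++ r
  else [:: [::]].

Definition order_iso (t p : seq nat) : bool :=
  (size t == size p) &&
  all (fun a => all (fun b =>
     ((nth 0 t a < nth 0 t b) == (nth 0 p a < nth 0 p b)) &&
     ((nth 0 t a == nth 0 t b) == (nth 0 p a == nth 0 p b)))
     (iota 0 (size p))) (iota 0 (size p)).

Definition contains (sigma p : seq nat) : bool :=
  has (fun t => order_iso t p) (subseqs sigma).

Definition avoids_all (Pi : seq (seq nat)) (sigma : seq nat) : bool :=
  all (fun p => ~~ contains sigma p) Pi.

Fixpoint words (n L : nat) : seq (seq nat) :=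
  if L is L'.+1 then [seq i :: w | i <- iota 1 n, w <- words n L'] else [:: [::]].

Definition is_multiperm (n m : nat) (sigma : seq nat) : bool :=
  (size sigma == n * m) && all (fun x => 0 < x <= n) sigma &&
  all (fun i => count_mem i sigma == m) (iota 1 n).

Definition s_nm (n m : nat) (Pi : seq (seq nat)) : nat :=
  size [seq w <- words n (n * m) | is_multiperm n m w && avoids_all Pi w].

From mathcomp Require Import all_boot zify.

Set Implicit Arguments.
Unset Strict Implicit.
Unset Printing Implicit Defensive.

(* A word contains 112 or 122 exactly when it has a subsequence [a; a; b] or
   [a; b; b] with a < b (avoids112_122P).  Let w avoid both patterns, be a
   permutation of [n+2]_m, and let c = n+2 be its largest letter.  After the
   first letter y <> c of w at most one copy of c can occur (else y c c), and
   if one does it directly follows y: otherwise the letter z after y gives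
   y z z, z y y or y y c, because y and z occur m >= 3 times
   (no_max_after_two_others).  Hence w = insert_max m c k v with k <= 1,
   where v is w with all copies of c erased (avoider_insert_max); conversely
   every such insertion into an avoider v is an avoider (avoids_insert_max),
   and distinct pairs (k, v) give distinct words (insert_max_inj).

   So the avoiders of [n+1]_m are exactly the elements of the list
   [avoiders m (n+1)], obtained from [:: 1^m] by n doubling steps; it is
   duplicate-free of size 2^n, and comparing it with the filtered list of
   words defining s_{n,m} proves the theorem. *)

Lemma mem_subseqs s t : (t \in subseqs s) = subseq t s.
Proof.
elim: s t => [|x s IH] t /=; first by case: t.
rewrite mem_cat IH; case: t => [|y t] /=; first by rewrite sub0seq orbT.
case: (eqVneq y x) => [->|yx].
  rewrite mem_map; last by move=> u v [].
  rewrite IH; apply/idP/idP => [/orP[//|]|->//].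
  exact/subseq_trans/subseq_cons.
suff -> : (y :: t \in [seq x :: u | u <- subseqs s]) = false by [].
by apply/negbTE/mapP => -[u _ [eyx _]]; rewrite eyx eqxx in yx.
Qed.

Lemma order_iso_112 (x y z : nat) :
  order_iso [:: x; y; z] [:: 1; 1; 2] = (x == y) && (x < z).
Proof. by rewrite /order_iso /=; lia. Qed.

Lemma order_iso_122 (x y z : nat) :
  order_iso [:: x; y; z] [:: 1; 2; 2] = (y == z) && (x < y).
Proof. by rewrite /order_iso /=; lia. Qed.

Definition avoids112_122 (s : seq nat) : Prop :=
  forall a b, a < b -> ~~ subseq [:: a; a; b] s /\ ~~ subseq [:: a; b; b] s.

Lemma avoids112_122P s :
  avoids_all [:: [:: 1; 1; 2]; [:: 1; 2; 2]] s <-> avoids112_122 s.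
Proof.
rewrite /avoids_all /= andbT /contains.
split=> [/andP[/hasPn no112 /hasPn no122] a b ab | av].
  split; apply/negP; rewrite -mem_subseqs.
    by move=> /no112; rewrite order_iso_112 eqxx ab.
  by move=> /no122; rewrite order_iso_122 eqxx ab.
apply/andP; split; apply/hasPn => -[|x [|y [|z [|? ?]]]];
  rewrite mem_subseqs ?order_iso_112 ?order_iso_122 //;
  by apply: contraL => /andP[/eqP <- /av[]].
Qed.

Lemma avoids_subseq s t : subseq s t -> avoids112_122 t -> avoids112_122 s.
Proof.
move=> st av a b ab; have [no112 no122] := av a b ab.
by split; [apply: contra no112 | apply: contra no122] => /subseq_trans; apply.
Qed.

Lemma avoids_nseq m x : avoids112_122 (nseq m x).
Proof.
move=> a b ab; suff no_ab p : a \in p -> b \in p -> ~~ subseq p (nseq m x).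
  by split; apply: no_ab; rewrite !inE eqxx ?orbT.
move=> ap bp; apply/negP => /mem_subseq sub.
move: (sub a ap) (sub b bp); rewrite !mem_nseq.
by move=> /andP[_ /eqP ax] /andP[_ /eqP bx]; lia.
Qed.

Lemma two_copies_subseq (x : nat) s : 1 < count_mem x s -> subseq [:: x; x] s.
Proof.
elim: s => //= y s IH; case: (eqVneq y x) => [_|yx] /=.
  by rewrite sub1seq -has_pred1 has_count /=; lia.
by move=> two; apply: IH; lia.
Qed.

Lemma mem_words n L w :
  (w \in words n L) = (size w == L) && all (fun x => 0 < x <= n) w.
Proof.
elim: L w => [|L IH] [|x w] //=; first by apply/allpairsP => -[[? ?] [_ _]].
apply/allpairsP/idP => [[[i u] [/= + + [-> ->]]] | /andP[/eqP[sw] /andP[x_in w_in]]].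
  by rewrite mem_iota IH => ? /andP[/eqP -> ->]; rewrite eqxx /= andbT; lia.
by exists (x, w); rewrite /= mem_iota IH sw eqxx w_in; split => //; lia.
Qed.

Lemma uniq_words n L : uniq (words n L).
Proof.
elim: L => //= L IH; apply: allpairs_uniq => //; first exact: iota_uniq.
by move=> [i u] [j v] _ _ /= [-> ->].
Qed.

Lemma is_multipermP n m s : is_multiperm n m s <->
  [/\ size s = n * m, (forall x, x \in s -> 0 < x <= n) &
      (forall i, 0 < i <= n -> count_mem i s = m)].
Proof.
rewrite /is_multiperm; split.
  move=> /andP[/andP[/eqP sz /allP letters] /allP counts]; split => // i ni.
  by apply/eqP/counts; rewrite mem_iota; lia.
move=> [sz letters counts]; rewrite sz eqxx /=.
by apply/andP; split; apply/allP => // i; rewrite mem_iota => ni; apply/eqP/counts; lia.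
Qed.

Lemma is_multiperm_max n m w : is_multiperm n.+1 m w <->
  count_mem n.+1 w = m /\ is_multiperm n m (filter (predC1 n.+1) w).
Proof.
have count_rest i : i != n.+1 ->
    count_mem i (filter (predC1 n.+1) w) = count_mem i w.
  by move=> ni; rewrite count_filter; apply: eq_count => x /=; case: eqVneq => // ->.
have size_rest : size (filter (predC1 n.+1) w) + count_mem n.+1 w = size w.
  by rewrite size_filter addnC; apply: (count_predC (pred1 n.+1)).
rewrite !is_multipermP; split=> [[sz letters counts] | [cmax [sz letters counts]]].
  have cmax : count_mem n.+1 w = m by apply: counts; lia.
  split=> //; split=> [|x|i ni].
  - by move: size_rest; rewrite sz cmax mulSn /=; lia.
  - by rewrite mem_filter => /andP[/= xn /letters]; lia.
  - by rewrite count_rest; [apply: counts|]; lia.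
split=> [|x xw|i ni].
- by move: size_rest; rewrite sz cmax mulSn /=; lia.
- case: (eqVneq x n.+1) => [->|xn]; first by lia.
  by have := letters x; rewrite mem_filter /= xn xw => /(_ isT); lia.
- case: (eqVneq i n.+1) => [->//|ni']; rewrite -count_rest //; apply: counts; lia.
Qed.

(* For k <= 1 these are the only
   shapes an avoider can have around its largest letter c. *)
Definition insert_max (m c k : nat) (v : seq nat) : seq nat :=
  nseq m.-1 c ++ take k v ++ c :: drop k v.

Section InsertMax.
Variables (m c : nat).

Lemma filter_insert_max (k : nat) (v : seq nat) :
  c \notin v -> filter (predC1 c) (insert_max m c k v) = v.
Proof.
move=> cv; rewrite /insert_max !filter_cat filter_nseq /= eqxx /= -filter_cat.
rewrite cat_take_drop; apply/all_filterP/allP => x xv /=.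
by apply: contraNneq cv => <-.
Qed.

Lemma count_insert_max (k : nat) (v : seq nat) :
  0 < m -> c \notin v -> count_mem c (insert_max m c k v) = m.
Proof.
move=> m_gt0 cv; have := count_cat (pred1 c) (take k v) (drop k v).
rewrite cat_take_drop (count_memPn cv) /insert_max !count_cat count_nseq /= eqxx.
lia.
Qed.

Lemma subseq_skip_nseq (j x : nat) (p t : seq nat) :
  x != c -> subseq (x :: p) (nseq j c ++ t) = subseq (x :: p) t.
Proof. by move=> xc; elim: j => //= j IH; rewrite (negbTE xc). Qed.

(* At most one letter of v precedes the last c and at most one c follows the
   first letter of v, so the inserted copies of c never complete a pattern. *)
Lemma insert_max_no_max_pattern (k : nat) (v : seq nat) (a : nat) :
  k <= 1 -> c \notin v -> a != c ->
  ~~ subseq [:: a; a; c] (insert_max m c k v) /\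
  ~~ subseq [:: a; c; c] (insert_max m c k v).
Proof.
move=> k_le1 cv ac; rewrite /insert_max !subseq_skip_nseq //.
have no_c s p : c \notin s -> c \in p -> ~~ subseq p s.
  by move=> cs cp; apply: contra cs => /mem_subseq; apply.
case: k k_le1 => [|[|//]] _.
  rewrite take0 drop0 /= (negbTE ac).
  by split; apply: no_c cv _; rewrite !inE eqxx ?orbT.
case: v cv => [|y r] cv; first by rewrite /= (negbTE ac).
rewrite [take 1 _]/= [drop 1 _]/= take0 drop0.
have cr : c \notin r by apply: contra cv; rewrite inE => ->; rewrite orbT.
case: (eqVneq a y) => [<-|ay]; rewrite /= ?eqxx ?(negbTE ay) /= (negbTE ac);
  by split; apply: no_c cr _; rewrite !inE eqxx ?orbT.
Qed.

Lemma avoids_insert_max (k : nat) (v : seq nat) :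
  k <= 1 -> all (fun x => x < c) v -> avoids112_122 v ->
  avoids112_122 (insert_max m c k v).
Proof.
move=> k_le1 /allP v_lt av a b ab.
have cv : c \notin v by apply/negP => /v_lt; rewrite ltnn.
set w := insert_max m c k v.
have w_le x : x \in w -> x <= c.
  move=> xw; case: (eqVneq x c) => [->//|xc]; apply/ltnW/v_lt.
  by rewrite -(filter_insert_max k cv) mem_filter /= xc xw.
suff no_pat x : (x == a) || (x == b) -> ~~ subseq [:: a; x; b] w.
  by split; apply: no_pat; rewrite eqxx ?orbT.
move=> xab; apply/negP => pw.
have ac : a < c by have := w_le b (mem_subseq pw _); rewrite !inE eqxx orbT; lia.
case: (eqVneq b c) => [bc|bc].
  subst b; have [] := insert_max_no_max_pattern k_le1 cv (negbT (ltn_eqF ac)).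
  by case/orP: xab pw => /eqP-> ->.
have [] := av a b ab.
have pv : subseq [:: a; x; b] v.
  rewrite -(filter_insert_max k cv) subseq_filter pw andbT /= bc.
  by case/orP: xab => /eqP->; rewrite ?bc (negbT (ltn_eqF ac)).
by case/orP: xab pv => /eqP-> ->.
Qed.

(* Different choices of k <= 1 and of v (nonempty, without c) give different
   words, because v is recovered by erasing c and k is read off at position
   m-1. *)
Lemma insert_max_inj (k1 k2 : nat) (v1 v2 : seq nat) :
  k1 <= 1 -> k2 <= 1 -> c \notin v1 -> c \notin v2 -> 0 < size v1 ->
  insert_max m c k1 v1 = insert_max m c k2 v2 -> (k1, v1) = (k2, v2).
Proof.
move=> k1_le1 k2_le1 cv1 cv2 v1_gt0 e.
have ev : v1 = v2 by rewrite -(filter_insert_max k1 cv1) e filter_insert_max.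
subst v2; clear cv2; congr pair; case: v1 v1_gt0 cv1 e => [//|y r] _ cv.
have yc : y != c by apply: contra cv => /eqP->; rewrite mem_head.
move/(congr1 (nth 0 ^~ m.-1)); rewrite /insert_max !nth_cat size_nseq ltnn subnn.
case: k1 k2 k1_le1 k2_le1 => [|[|//]] [|[|//]] //= _ _ eyc;
  by rewrite eyc eqxx in yc.
Qed.

End InsertMax.

Lemma filter_notin (c : nat) (s : seq nat) :
  c \notin s -> filter (predC1 c) s = s.
Proof. by move=> cs; apply/all_filterP/allP => x xs /=; apply: contraNneq cs => <-. Qed.

Lemma split_nseq_prefix (c : nat) (s : seq nat) : has (predC1 c) s ->
  exists j y r, s = nseq j c ++ y :: r /\ y != c.
Proof.
elim: s => //= x s IH; case: (eqVneq x c) => [-> /= /IH [j [y [r [-> yc]]]]|xc _].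
  by exists j.+1, y, r.
by exists 0, x, s.
Qed.

(* If the two letters following the c-prefix are both different from c, no c
   can follow them: otherwise y z z, z y y or y y c occurs, since y and z each
   occur m >= 3 times. *)
Lemma no_max_after_two_others (m c y z : nat) (r : seq nat) :
  2 < m -> y < c -> c \in r -> avoids112_122 [:: y, z & r] ->
  count_mem y [:: y, z & r] = m -> count_mem z [:: y, z & r] = m -> False.
Proof.
move=> m_gt2 yc cr av; rewrite /= eqxx.
case: (ltngtP y z) => [yz|zy|eyz].
- move=> _ cz; have [_ /negP] := av y z yz; apply.
  by rewrite /= !eqxx /= sub1seq -has_pred1 has_count /=; lia.
- move=> cy _; have [_ /negP] := av z y zy; apply.
  by rewrite /= (ltn_eqF zy) eqxx; apply: two_copies_subseq => /=; lia.
- subst z; have [/negP] := av y c yc.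
  by rewrite /= !eqxx /= sub1seq cr.
Qed.

Lemma avoider_insert_max (n m : nat) (w : seq nat) :
  2 < m -> is_multiperm n.+2 m w -> avoids112_122 w ->
  exists2 k, k <= 1 & w = insert_max m n.+2 k (filter (predC1 n.+2) w).
Proof.
set c := n.+2; move=> m_gt2 /is_multipermP[sz letters counts] av.
have /split_nseq_prefix[j [y [r [ew yc]]]] : has (predC1 c) w.
  apply/hasP; exists 1 => //.
  by rewrite -has_pred1 has_count counts /=; lia.
have y_lt : y < c.
  by have := letters y; rewrite ew mem_cat mem_head orbT => /(_ isT); lia.
have count_c : j + count_mem c r = m.
  rewrite -(counts c); last by lia.
  by rewrite ew count_cat count_nseq /= eqxx (negbTE yc) mul1n.
have filter_w : filter (predC1 c) w = y :: filter (predC1 c) r.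
  by rewrite ew filter_cat filter_nseq /= eqxx /= yc.
have [no_c|one_c] : count_mem c r = 0 \/ count_mem c r = 1.
  suff : count_mem c r <= 1 by lia.
  rewrite leqNgt; apply/negP => /two_copies_subseq ccr.
  have [_ /negP] := av y c y_lt; apply; rewrite ew.
  by apply: subseq_trans (suffix_subseq _ _); rewrite /= eqxx.
  exists 0 => //; rewrite filter_w filter_notin; last exact/count_memPn.
  rewrite ew /insert_max take0 drop0 (_ : j = m.-1.+1) /=; last by lia.
  by elim: (m.-1) => [|i IH] //=; rewrite IH.
case: r => [|z r] in ew count_c filter_w one_c *; first by [].
have c_or_r : (z == c) + count_mem c r = 1 by move: one_c => /=; rewrite eq_sym.
case: (eqVneq z c) => [ezc|zc] in c_or_r *.
  exists 1 => //; rewrite filter_w /= ezc eqxx /= filter_notin; last first.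
    by apply/count_memPn; move: c_or_r => /=; lia.
  by rewrite ew ezc /insert_max /= take0 drop0 (_ : j = m.-1) //; lia.
have count_suffix x : x \in [:: y, z & r] -> x != c ->
    count_mem x [:: y, z & r] = m.
  move=> xs xc; rewrite -(counts x); last by apply: letters; rewrite ew mem_cat xs orbT.
  by rewrite ew count_cat count_nseq /= (eq_sym c x) (negbTE xc).
exfalso; apply: (no_max_after_two_others m_gt2 y_lt _ _
  (count_suffix y (mem_head _ _) yc) (count_suffix z _ zc)).
- by rewrite -has_pred1 has_count; lia.
- by apply: avoids_subseq av; rewrite ew suffix_subseq.
- by rewrite !inE eqxx orbT.
Qed.

Fixpoint avoiders (m n : nat) : seq (seq nat) :=
  match n with
  | 0 => [::]
  | 1 => [:: nseq m 1]
  | n'.+1 => [seq insert_max m n k v | k <- iota 0 2, v <- avoiders m n']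
  end.

Lemma avoidersS (m n : nat) :
  avoiders m n.+2 = [seq insert_max m n.+2 k v | k <- iota 0 2, v <- avoiders m n.+1].
Proof. by []. Qed.

Lemma size_avoiders (m n : nat) : size (avoiders m n.+1) = 2 ^ n.
Proof. by elim: n => // n IH; rewrite avoidersS size_allpairs IH expnS. Qed.

Lemma multiperm_lt (n m : nat) (v : seq nat) :
  is_multiperm n m v -> all (fun x => x < n.+1) v.
Proof. by move=> /is_multipermP[_ letters _]; apply/allP => x /letters; lia. Qed.

Lemma avoidersP (m n : nat) (w : seq nat) : 2 < m ->
  w \in avoiders m n.+1 <-> is_multiperm n.+1 m w /\ avoids112_122 w.
Proof.
move=> m_gt2; elim: n w => [|n IH] w.
  rewrite inE; split=> [/eqP ->|[/is_multipermP[sz letters _] _]].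
    split; last exact: avoids_nseq.
    apply/is_multipermP; split=> [|x|i i1]; rewrite ?size_nseq ?mul1n //.
      by rewrite mem_nseq => /andP[_ /eqP ->].
    by rewrite count_nseq /= (_ : i = 1) ?eqxx ?mul1n //; lia.
  apply/eqP; move: sz; rewrite mul1n => <-; apply/all_pred1P/allP => x /letters /=; lia.
rewrite avoidersS is_multiperm_max; split.
  case/allpairsP => -[k v] [k_in /IH[mpv avv] ->].
  have k_le1 : k <= 1 by move: k_in; rewrite mem_iota /=; lia.
  have /allP v_lt := multiperm_lt mpv.
  have cv : n.+2 \notin v by apply/negP => /v_lt; rewrite ltnn.
  rewrite count_insert_max ?filter_insert_max //; last by lia.
  by split=> //; apply: avoids_insert_max => //; apply/allP.
move=> [[cmax mpv] avw]; apply/allpairsP.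
have mpw : is_multiperm n.+2 m w by apply/is_multiperm_max.
have [k k_le1 ew] := avoider_insert_max m_gt2 mpw avw.
exists (k, filter (predC1 n.+2) w); split=> //; first by rewrite mem_iota /=; lia.
by apply/IH; split=> //; apply: avoids_subseq avw; apply: filter_subseq.
Qed.

Lemma uniq_avoiders (m n : nat) : 2 < m -> uniq (avoiders m n.+1).
Proof.
move=> m_gt2; elim: n => // n IH; rewrite avoidersS; apply: allpairs_uniq => //.
have prev v : v \in avoiders m n.+1 -> n.+2 \notin v /\ 0 < size v.
  case/(avoidersP _ _ m_gt2) => /is_multipermP[sz letters _] _.
  by rewrite sz; split; [apply/negP => /letters | ]; lia.
move=> p1 p2 /allpairsP[[k1 v1] [k1_in /prev[cv1 v1_gt0] ->]].
move=> /allpairsP[[k2 v2] [k2_in /prev[cv2 _] ->]].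
by apply: insert_max_inj cv1 cv2 v1_gt0; move: k1_in k2_in; rewrite !mem_iota /=; lia.
Qed.

Theorem theorem1 (m n : nat) (hm : 3 <= m) (hn : 1 <= n) :
  s_nm n m [:: [:: 1; 1; 2]; [:: 1; 2; 2]] = 2 ^ (n - 1).
Proof.
case: n hn => [//|n] _; rewrite subn1 /= -(size_avoiders m n) /s_nm.
apply/perm_size/uniq_perm; [by rewrite filter_uniq ?uniq_words | exact: uniq_avoiders |].
move=> w; rewrite mem_filter mem_words; apply/idP/idP.
  by move=> /andP[/andP[mpw /avoids112_122P avw] _]; apply/(avoidersP _ _ hm).
move=> /(avoidersP _ _ hm)[mpw /avoids112_122P avw].
have /is_multipermP[sz letters _] := mpw.
by rewrite mpw avw sz eqxx; apply/allP.
Qed.
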